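(* Let $\mu,\nu\in P_1(\mathbb{R}^d)$. The following are equivalent: (i) $\int\varphi\,d\mu\le\int\varphi\,d\nu$ for every lower semicontinuous proper convex $\varphi:\mathbb{R}^d\to\mathbb{R}\cup\{+\infty\}$ such that both integrals exist in the extended sense; (ii) $\int\varphi\,d\mu\le\int\varphi\,d\nu$ for every lower semicontinuous proper convex $\varphi$ which is bounded from below; (iii) $\int\varphi\,d\mu\le\int\varphi\,d\nu$ for every Lipschitz continuous convex $\varphi:\mathbb{R}^d\to\mathbb{R}$.
   Context: $P_1(\mathbb{R}^d)$ is the set of Borel probability measures on $\mathbb{R}^d$ with finite first moment. *)

From HB Require Import structures.
From mathcomp Require Import all_boot all_order all_algebra.
From mathcomp Require Import all_classical all_reals all_analysis.
From mathcomp Require Import measurable_realfun.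
Set Implicit Arguments. Unset Strict Implicit. Unset Printing Implicit Defensive.
Import Order.TTheory GRing.Theory Num.Theory.
Import numFieldNormedType.Exports.
Local Open Scope classical_set_scope.
Local Open Scope ring_scope.

Definition Borel (R : realType) (d : nat) :=
  g_sigma_algebraType (@open 'rV[R]_d).

Definition finite_first_moment (R : realType) (d : nat)
  (mu : probability (Borel R d) R) : Prop :=
  (\int[mu]_x (`|(x : 'rV[R]_d)|)%:E < +oo)%E.

(* properness of phi : R^d -> R \cup {+oo} (values in \bar R, never -oo,
   not identically +oo) *)
Definition proper_fun (R : realType) (d : nat) (phi : 'rV[R]_d -> \bar R) :=
  (forall x, phi x != -oo%E) /\ (exists x, phi x != +oo%E).

(* convexity of an extended-valued function (with mathcomp's convention
   0 * +oo = 0, irrelevant here since 0 < t < 1) *)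
Definition ext_convex (R : realType) (d : nat) (phi : 'rV[R]_d -> \bar R) :=
  forall (x y : 'rV[R]_d) (t : R), 0 < t < 1 ->
    (phi ((1 - t) *: x + t *: y)%R <= (1 - t)%:E * phi x + t%:E * phi y)%E.

(* the integral of phi w.r.t. mu exists in the extended sense:
   phi is measurable and at least one of the integrals of phi^+, phi^- is finite
   (mathcomp's \int is then  \int phi^+ - \int phi^-) *)
Definition integral_exists (R : realType) (d : nat)
  (mu : probability (Borel R d) R) (phi : 'rV[R]_d -> \bar R) :=
  measurable_fun [set: Borel R d] (fun x : Borel R d => phi x) /\
  ((\int[mu]_x (phi^\+ x) < +oo)%E \/ (\int[mu]_x (phi^\- x) < +oo)%E).

Definition lipschitz_fun (R : realType) (d : nat) (phi : 'rV[R]_d -> R) :=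
  exists L : R, forall x y : 'rV[R]_d, `|phi x - phi y| <= L * `|x - y|.

Definition real_convex (R : realType) (d : nat) (phi : 'rV[R]_d -> R) :=
  forall (x y : 'rV[R]_d) (t : R), 0 < t < 1 ->
    phi ((1 - t) *: x + t *: y) <= (1 - t) * phi x + t * phi y.

From HB Require Import structures.
From mathcomp Require Import all_boot all_order all_algebra.
From mathcomp Require Import all_classical all_reals all_analysis.
From mathcomp Require Import measurable_realfun.
From mathcomp Require Import lra ring.
Import Order.TTheory GRing.Theory Num.Theory.
Import numFieldNormedType.Exports.
Local Open Scope classical_set_scope.
Local Open Scope ring_scope.

(* (i) and (ii) are equivalent because a bounded-below [phi] has an integrable
   negative part, while an [nu]-integrable [phi] with [\int phi^+ dnu < +oo] is
   the decreasing limit of its truncations [max(phi, -n)] (and otherwise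
   [\int phi dnu = +oo]).  Lipschitz functions are integrable against measures
   with a finite first moment, whence (ii) -> (iii).  Conversely, the
   Pasch-Hausdorff envelopes [phi_n x = inf_y phi y + n |x - y|] of a lower
   semicontinuous convex [phi] bounded below are n-Lipschitz, convex, and
   increase pointwise to [phi], so (iii) -> (ii) by monotone convergence. *)

Section probability_integral.
Local Open Scope ereal_scope.
Context {d} {T : measurableType d} {R : realType}.
Implicit Types (P : probability T R) (f g : T -> \bar R).

Lemma le_integral_measurable (mu : {measure set T -> \bar R}) f g :
  measurable_fun setT f -> measurable_fun setT g -> (forall x, f x <= g x) ->
  \int[mu]_x f x <= \int[mu]_x g x.
Proof.
move=> mf mg fg; rewrite [leLHS]integralE [leRHS]integralE; apply: leeB.
- apply: ge0_le_integral => //; try exact: measurable_funepos.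
  move=> x _; apply: (funepos_le (D := setT)); last exact: in_setT.
  by move=> y _; exact: fg.
- apply: ge0_le_integral => //; try exact: measurable_funeneg.
  move=> x _; apply: (funeneg_le (D := setT)); last exact: in_setT.
  by move=> y _; exact: fg.
Qed.

Lemma bounded_below_integral_funeneg_lty P f (c : R) :
  measurable_fun setT f -> (forall x, c%:E <= f x) -> \int[P]_x f^\- x < +oo.
Proof.
move=> mf fc; apply: (@le_lt_trans _ _ (\int[P]_x (cst `|c|%:E) x)).
  apply: ge0_le_integral => //; first exact: measurable_funeneg.
  move=> x _; rewrite funenegE ge_max lee_fin normr_ge0 andbT leeNl.
  by apply: le_trans (fc x); rewrite lee_fin lerNl -normrN ler_norm.
by rewrite integral_cst //= probability_setT mule1 ltry.
Qed.

Lemma integralD_cst_bounded_below P f (k : R) :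
  (0 <= k)%R -> measurable_fun setT f -> (forall x, (- k)%:E <= f x) ->
  \int[P]_x (f x + k%:E) = \int[P]_x f x + k%:E.
Proof.
move=> k0 mf fk.
have mfpos := measurable_funepos mf; have mfneg := measurable_funeneg mf.
have fneg_le x : f^\- x <= k%:E.
  by rewrite funenegE ge_max lee_fin k0 andbT leeNl -EFinN.
have fneg_int : P.-integrable setT f^\-.
  apply: (@le_integrable _ _ _ _ _ _ _ (EFin \o cst k)) => //.
    by move=> x _ /=; rewrite gee0_abs ?funeneg_ge0 // ger0_norm.
  exact: finite_measure_integrable_cst.
have fneg_fin : \int[P]_x f^\- x \is a fin_num.
  rewrite ge0_fin_numE; last exact: integral_ge0.
  exact: bounded_below_integral_funeneg_lty mf fk.
have fkE x : f x + k%:E = f^\+ x + (cst k%:E \- f^\-) x.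
  rewrite {1}(funeposneg f) /=.
  case: (f^\- x) (funeneg_ge0 f x) (fneg_le x) => [r| |] // _ _.
  by rewrite addeAC addeA.
under eq_integral => x _ do rewrite fkE.
rewrite ge0_integralD //; last 2 first.
- move=> x _ /=; case: (f^\- x) (funeneg_ge0 f x) (fneg_le x) => [r| |] // _.
  by rewrite subre_ge0.
- exact: emeasurable_funB.
rewrite integralB //; last exact: finite_measure_integrable_cst.
rewrite integral_cst //= probability_setT mule1 [in RHS]integralE.
move: fneg_fin; move: (\int[P]_x f^\- x) => [a _| |] //.
by rewrite addeA addeAC.
Qed.

Lemma cvg_monotone_convergence_bounded_below P {g : (T -> \bar R)^nat} {f}
    {k : R} : (0 <= k)%R ->
  (forall n, measurable_fun setT (g n)) -> (forall n x, (- k)%:E <= g n x) ->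
  (forall x, nondecreasing_seq (g ^~ x)) -> (forall x, g ^~ x @ \oo --> f x) ->
  \int[P]_x g n x @[n --> \oo] --> \int[P]_x f x.
Proof.
move=> k0 mg gk ndg gf.
have mf : measurable_fun setT f.
  by apply: emeasurable_fun_cvg mg _ => x _; exact: gf.
have fk x : (- k)%:E <= f x by apply: (cvge_to_ge (gf x)); exact: nearW.
pose h n x := g n x + k%:E.
have mh n : measurable_fun setT (h n).
  by apply: emeasurable_funD => //; exact: measurable_cst.
have h_ge0 n x : [set: T] x -> 0 <= h n x.
  by move=> _; rewrite /h -leeBlDr // sub0e -EFinN.
have h_nd x : [set: T] x -> nondecreasing_seq (h^~ x).
  by move=> _ m n mn; rewrite /h leeD2r //; exact: ndg.
have := @cvg_monotone_convergence _ _ _ P _ measurableT _ mh h_ge0 h_nd.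
have -> : (fun x => limn (h^~ x)) = (fun x => f x + k%:E).
  apply/funext => x; apply/cvg_lim => //.
  by apply: cvgeD => //; [exact: fin_num_adde_defl | exact: cvg_cst].
rewrite integralD_cst_bounded_below //.
under eq_fun do rewrite /h integralD_cst_bounded_below //.
move=> /cvgeB /(_ (cvg_cst k%:E)).
rewrite addeK // => /(_ (fin_num_adde_defl _ _)).
by under eq_fun do rewrite addeK //; apply.
Qed.

(* The truncations [maxe f (-n)] share [f^\+] with [f], and their negative
   parts increase to [f^\-]. *)
Lemma le_integral_truncations (mu nu : probability T R) f :
  measurable_fun setT f -> (forall x, f x != -oo) ->
  \int[nu]_x f^\+ x < +oo ->
  (forall n : nat, \int[mu]_x maxe (f x) (- n%:R)%:E <=
                   \int[nu]_x maxe (f x) (- n%:R)%:E) ->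
  \int[mu]_x f x <= \int[nu]_x f x.
Proof.
move=> mf fNy nu_fpos_lty le_trunc.
pose g n x := maxe (f x) (- n%:R)%:E.
have mg n : measurable_fun setT (g n).
  by apply: measurable_maxe => //; exact: measurable_cst.
have gposE n : (g n)^\+ = f^\+.
  apply/funext => x; rewrite !funeposE /g -maxA; congr maxe.
  by apply/max_idPr; rewrite lee_fin oppr_le0.
have mu_le_g n : \int[mu]_x f x <= \int[mu]_x g n x.
  by apply: le_integral_measurable => // x; rewrite /g le_max lexx.
have gneg_nd x : [set: T] x -> nondecreasing_seq (fun n => (g n)^\- x).
  move=> _ m n mn; apply: (funeneg_le (D := setT)); last exact: in_setT.
  by move=> y _; apply: le_max2 => //; rewrite lee_fin lerN2 ler_nat.
have gneg_lim : (fun x => limn (fun n => (g n)^\- x)) = f^\-.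
  apply/funext => x; apply/cvg_lim => //; apply: cvg_near_cst.
  move: (fNy x); case fx: (f x) => [r| |] // _; near=> n;
    rewrite !funenegE /g fx; congr (maxe (- _) 0); apply/max_idPl => //.
  by rewrite lee_fin lerNl; near: n; exact: nbhs_infty_ger.
have := @cvg_monotone_convergence _ _ _ nu _ measurableT (fun n => (g n)^\-)
  (fun n => measurable_funeneg (mg n)) (fun n x _ => funeneg_ge0 _ x) gneg_nd.
have nu_fpos_fin : \int[nu]_x f^\+ x \is a fin_num.
  by rewrite ge0_fin_numE // integral_ge0.
rewrite gneg_lim => /(cvgeB _ (cvg_cst (\int[nu]_x f^\+ x))).
move=> /(_ (fin_num_adde_defr _ nu_fpos_fin)) nu_cvg.
rewrite [leRHS]integralE; apply: (cvge_to_ge nu_cvg); apply: nearW => n.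
by rewrite -(gposE n) -integralE; apply: le_trans (mu_le_g n) (le_trunc n).
Unshelve. all: by end_near.
Qed.

End probability_integral.

Lemma lower_semicontinuous_measurable_open {R : realType} {T : ptopologicalType}
    {f : T -> \bar R} : lower_semicontinuous f ->
  measurable_fun [set: g_sigma_algebraType (@open T)] f.
Proof.
move=> lsc_f; apply: (measurability _ (ErealGenOInfty.measurableE R)).
move=> /= _ [_ [a ->]] <-; apply: measurableI => //.
rewrite preimage_itvoy; apply: sub_gen_smallest.
exact: (proj1 (lower_semicontinuousP f) lsc_f a).
Qed.

Lemma lower_semicontinuous_maxe_cst (R : realType) (T : topologicalType)
    (f : T -> \bar R) (c : R) :
  lower_semicontinuous f -> lower_semicontinuous (fun x => maxe (f x) c%:E).
Proof.
move=> lsc_f x a; rewrite lt_max => /orP[/lsc_f[V Vx aV]|ac].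
  by exists V => // y /aV ay; rewrite lt_max ay.
by exists setT => [|y _]; [exact: filterT | rewrite lt_max ac orbT].
Qed.

Section row_vectors.
Local Open Scope ereal_scope.
Context {R : realType} {d : nat}.
Implicit Types (x y : 'rV[R]_d) (phi : 'rV[R]_d -> \bar R).

Lemma ext_convex_maxe_cst phi (c : R) :
  ext_convex phi -> ext_convex (fun x => maxe (phi x) c%:E).
Proof.
move=> cvx_phi x y t /andP[t0 t1].
have t_ge0 : 0 <= t%:E by rewrite lee_fin ltW.
have t1_ge0 : 0 <= (1 - t)%:E by rewrite lee_fin subr_ge0 ltW.
rewrite ge_max; apply/andP; split.
  apply: (le_trans (cvx_phi x y t _)); first by rewrite t0 t1.
  by apply: leeD; apply: lee_wpmul2l => //; rewrite le_max lexx.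
rewrite [leLHS](_ : c%:E = (1 - t)%:E * c%:E + t%:E * c%:E); last first.
  by rewrite -!EFinM -EFinD; congr EFin; ring.
by apply: leeD; apply: lee_wpmul2l => //; rewrite le_max lexx orbT.
Qed.

Lemma proper_fun_maxe_cst phi (c : R) :
  proper_fun phi -> proper_fun (fun x => maxe (phi x) c%:E).
Proof.
move=> [_ [x0 phix0]]; split=> [x|].
  have : c%:E <= maxe (phi x) c%:E by rewrite le_max lexx orbT.
  by apply: contraTneq => ->.
exists x0; move: phix0; case: (phi x0) => [r| |] //= _.
  by rewrite -EFin_max.
by rewrite (max_idPr (leNye _)).
Qed.

Lemma lipschitz_fun_norm : lipschitz_fun (fun x : 'rV[R]_d => `|x|%R).
Proof. by exists 1%R => x y; rewrite mul1r ler_dist_dist. Qed.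

Lemma lipschitz_lower_semicontinuous {f : 'rV[R]_d -> R} :
  lipschitz_fun f -> lower_semicontinuous (fun x => (f x)%:E).
Proof.
move=> [L fL] x a; rewrite lte_fin => afx.
have L1_gt0 : (0 < `|L| + 1)%R by rewrite ltr_wpDl.
pose e := ((f x - a) / (`|L| + 1))%R.
have e_gt0 : (0 < e)%R by rewrite divr_gt0 // subr_gt0.
exists (ball x e); first exact: nbhsx_ballx.
move=> y; rewrite -ball_normE /= lte_fin => xy.
have : ((`|L| + 1) * `|x - y| < f x - a)%R by rewrite mulrC -ltr_pdivlMr.
have : (L * `|x - y| <= (`|L| + 1) * `|x - y|)%R.
  by rewrite ler_wpM2r // (le_trans (ler_norm L)) // lerDl.
have := ler_norm (f x - f y); have := fL x y; lra.
Qed.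

End row_vectors.

Section integral_exists.
Local Open Scope ereal_scope.
Context {R : realType} {d : nat} (P : probability (Borel R d) R).

Lemma integral_exists_bounded_below (phi : 'rV[R]_d -> \bar R) (c : R) :
  lower_semicontinuous phi -> (forall x, c%:E <= phi x) ->
  integral_exists P phi.
Proof.
move=> lsc_phi phi_ge.
have mphi := lower_semicontinuous_measurable_open lsc_phi.
by split; last (right; exact: bounded_below_integral_funeneg_lty mphi phi_ge).
Qed.

Lemma integral_exists_lipschitz (f : 'rV[R]_d -> R) :
  finite_first_moment P -> lipschitz_fun f ->
  integral_exists P (fun x => (f x)%:E).
Proof.
move=> P_moment lip_f; have [L fL] := lip_f.
have mf := lower_semicontinuous_measurable_open
  (lipschitz_lower_semicontinuous lip_f).
have mnorm : measurable_fun [set: Borel R d]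
    (fun x : Borel R d => (`|x : 'rV[R]_d|%R)%:E).
  exact: lower_semicontinuous_measurable_open
    (lipschitz_lower_semicontinuous lipschitz_fun_norm).
split => //; left.
apply: (@le_lt_trans _ _
  (\int[P]_x (`|f 0%R|%:E + `|L|%:E * (`|x : 'rV[R]_d|%R)%:E))).
  apply: ge0_le_integral => //.
  - exact: measurable_funepos.
  - by apply: emeasurable_funD => //; exact: measurable_funeM.
  move=> x _; rewrite funeposE ge_max -EFinM -EFinD !lee_fin.
  apply/andP; split; last by rewrite addr_ge0 ?mulr_ge0.
  have := fL x 0%R; rewrite subr0.
  have := ler_norm (f x - f 0%R); have := ler_norm (f 0%R).
  have : (L * `|x| <= `|L| * `|x|)%R by rewrite ler_wpM2r // ler_norm.
  lra.
rewrite ge0_integralD //; last exact: measurable_funeM.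
rewrite integral_cst //= probability_setT mule1 ge0_integralZl //.
have norm_fin : \int[P]_x (`|x : 'rV[R]_d|%R)%:E \is a fin_num.
  by rewrite ge0_fin_numE // integral_ge0.
by rewrite -(fineK norm_fin) -EFinM -EFinD ltry.
Qed.

End integral_exists.

Lemma norm_convex_combB {R : numDomainType} {V : normedModType R}
    (x x' y y' : V) (t : R) : 0 <= t -> t <= 1 ->
  `|((1 - t) *: x + t *: x') - ((1 - t) *: y + t *: y')|
    <= (1 - t) * `|x - y| + t * `|x' - y'|.
Proof.
move=> t0 t1.
have -> : (1 - t) *: x + t *: x' - ((1 - t) *: y + t *: y')
          = (1 - t) *: (x - y) + t *: (x' - y').
  by rewrite !scalerBr opprD addrACA.
apply: le_trans (ler_normD _ _) _.
by rewrite !normrZ !ger0_norm ?subr_ge0.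
Qed.

Lemma lee_of_lt_fin (R : realType) (x y : \bar R) :
  (forall a : R, a%:E < x -> a%:E <= y)%E -> (x <= y)%E.
Proof.
case: x => [r| |] lt_le; last exact: leNye.
  apply/lee_subgt0Pr => e e0; apply: lt_le.
  by rewrite lte_fin ltrBlDr ltrDl.
case: y lt_le => [s| |] // lt_le.
  by have := lt_le (s + 1)%R (ltry _); rewrite lee_fin gerDl ler10.
by have := lt_le 0%R (ltry _).
Qed.

Section lipschitz_envelope.
Local Open Scope ereal_scope.
Context {R : realType} {d : nat} (phi : 'rV[R]_d -> \bar R) {c : R}.
Hypothesis phi_ge : forall x, c%:E <= phi x.

(* The Pasch-Hausdorff envelope: the largest [n]-Lipschitz minorant of [phi]. *)
Definition env (n : nat) (x : 'rV[R]_d) :=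
  ereal_inf (range (fun y => phi y + (n%:R * `|x - y|)%:E)).

Lemma env_le n x y : env n x <= phi y + (n%:R * `|x - y|)%:E.
Proof. by apply: ereal_inf_lbound; exists y. Qed.

Lemma env_ge n x : c%:E <= env n x.
Proof.
apply/ereal_infP => _ [y _ <-].
by apply: lee_paddr; [rewrite lee_fin mulr_ge0 | exact: phi_ge].
Qed.

Lemma env_le_phi n x : env n x <= phi x.
Proof. by have := env_le n x x; rewrite subrr normr0 mulr0 adde0. Qed.

Lemma env_nondecreasing x : nondecreasing_seq (env ^~ x).
Proof.
move=> m n mn; apply/ereal_infP => _ [y _ <-]; apply: le_trans (env_le m x y) _.
by apply: leeD => //; rewrite lee_fin ler_wpM2r // ler_nat.
Qed.

Lemma env_le_shift n x x' : env n x <= env n x' + (n%:R * `|x - x'|)%:E.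
Proof.
rewrite -leeBlDr //; apply/ereal_infP => _ [y _ <-]; rewrite leeBlDr //.
apply: le_trans (env_le n x y) _; rewrite -addeA -EFinD -mulrDr.
apply: leeD => //; rewrite lee_fin ler_wpM2l // [leRHS]addrC.
exact: ler_distD.
Qed.

Hypothesis lsc_phi : lower_semicontinuous phi.

(* Above the level [a], [phi] is bounded below by [c] far from [x] and by [a]
   near [x] (lower semicontinuity), so a steep enough cone does the rest. *)
Lemma env_ge_lt_phi x (a : R) : a%:E < phi x -> exists n, a%:E <= env n x.
Proof.
move=> /lsc_phi[V /nbhs_ballP[del del_gt0 ballV] aV].
have [N _ /(_ N (leqnn N)) N_gt] := nbhs_infty_gtr ((a - c) / del).
exists N; apply/ereal_infP => _ [y _ <-].
have [xy|yx] := ltP `|x - y|%R del.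
  apply: lee_paddr; first by rewrite lee_fin mulr_ge0.
  by apply/ltW/aV/ballV; rewrite -ball_normE.
apply: le_trans (leeD (phi_ge y) (lexx _)); rewrite -EFinD lee_fin -lerBlDl.
apply: le_trans (ltW _) (ler_wpM2l (ler0n _ N) yx).
by rewrite -ltr_pdivrMr.
Qed.

Lemma cvg_env x : env ^~ x @ \oo --> phi x.
Proof.
suff <- : ereal_sup (range (env ^~ x)) = phi x.
  exact/ereal_nondecreasing_cvgn/env_nondecreasing.
apply/le_anti/andP; split.
  by apply/ereal_supP => _ [n _ <-]; exact: env_le_phi.
apply: lee_of_lt_fin => a /env_ge_lt_phi[n an].
by apply: le_trans an (ereal_sup_ubound _); exists n.
Qed.

Context {x0 : 'rV[R]_d}.
Hypothesis phix0 : phi x0 != +oo.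

Lemma env_fin_num n x : env n x \is a fin_num.
Proof.
rewrite fin_numE; apply/andP; split.
  by apply: contraTneq (env_ge n x) => ->; rewrite leNgt ltNyr.
apply: contra_neq phix0 => env_y.
by have := env_le n x x0; rewrite env_y leye_eq => /eqP; case: (phi x0).
Qed.

Definition envr n x := fine (env n x).

Lemma envrE n x : (envr n x)%:E = env n x.
Proof. exact/fineK/env_fin_num. Qed.

Lemma lipschitz_envr n : lipschitz_fun (envr n).
Proof.
have le_shift x x' : (envr n x - envr n x' <= n%:R * `|x - x'|)%R.
  by rewrite lerBlDl -lee_fin EFinD !envrE env_le_shift.
exists n%:R => x x'; rewrite ler_norml le_shift andbT lerNl opprB.
by rewrite distrC le_shift.
Qed.

Lemma envr_approx n x {e : R} : (0 < e)%R ->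
  exists y, exists2 r, phi y = r%:E & (r + n%:R * `|x - y| < envr n x + e)%R.
Proof.
move=> e_gt0.
have [_ [y _ <-]] := lb_ereal_inf_adherent e_gt0 (env_fin_num n x).
rewrite -/(env n x) -envrE -EFinD => yx; exists y.
by move: (phi_ge y) yx; case: (phi y) => [r| |] // _; rewrite lte_fin; exists r.
Qed.

Hypothesis cvx_phi : ext_convex phi.

(* Near-optimal points [y], [y'] for [x], [x'] combine into the competitor [w]
   for [z], by convexity of [phi] and of the norm. *)
Lemma real_convex_envr n : real_convex (envr n).
Proof.
move=> x x' t /andP[t0 t1]; apply/ler_addgt0Pr => e e_gt0.
have [y [r phiy ry]] := envr_approx n x e_gt0.
have [y' [r' phiy' ry']] := envr_approx n x' e_gt0.
set z := ((1 - t) *: x + t *: x')%R; set w := ((1 - t) *: y + t *: y')%R.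
have := cvx_phi y y' t; rewrite t0 t1 phiy phiy' -!EFinM -EFinD => /(_ isT).
move: (env_le n z w); rewrite -envrE.
case: (phi w) (phi_ge w) => [p| |] // _.
rewrite -EFinD !lee_fin => env_zw phi_w.
have := norm_convex_combB x x' y y' t (ltW t0) (ltW t1).
rewrite -/z -/w => /(ler_wpM2l (ler0n _ n)); rewrite mulrDr => zw.
have t1' : (0 <= 1 - t)%R by rewrite subr_ge0 ltW.
have := ler_wpM2l (ltW t0) (ltW ry'); have := ler_wpM2l t1' (ltW ry).
rewrite !mulrDr; nra.
Qed.

Lemma le_integral_of_lipschitz_convex (mu nu : probability (Borel R d) R) :
  (forall f : 'rV[R]_d -> R, lipschitz_fun f -> real_convex f ->
     \int[mu]_x (f x)%:E <= \int[nu]_x (f x)%:E) ->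
  \int[mu]_x phi x <= \int[nu]_x phi x.
Proof.
move=> le_lip.
pose g n (x : Borel R d) := (envr n x)%:E.
have mg n : measurable_fun setT (g n).
  exact: lower_semicontinuous_measurable_open
    (lipschitz_lower_semicontinuous (lipschitz_envr n)).
have g_ge n x : (- `|c|)%:E <= g n x.
  rewrite /g envrE (le_trans _ (env_ge n x)) //.
  by rewrite lee_fin lerNl -normrN ler_norm.
have g_nd x : nondecreasing_seq (g ^~ x).
  by move=> m n mn; rewrite /g !envrE; exact: env_nondecreasing.
have g_cvg x : g ^~ x @ \oo --> phi x.
  rewrite (_ : g ^~ x = env ^~ x); first exact: cvg_env.
  by apply/funext => n; exact: envrE.
have [mu_cvg nu_cvg] := (cvg_monotone_convergence_bounded_below mu
  (normr_ge0 c) mg g_ge g_nd g_cvg, cvg_monotone_convergence_bounded_below nu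
  (normr_ge0 c) mg g_ge g_nd g_cvg).
apply: (lee_cvg_to mu_cvg nu_cvg); apply: nearW => n.
by apply: le_lip; [exact: lipschitz_envr | exact: real_convex_envr].
Qed.

End lipschitz_envelope.

Lemma le_integral_convex_of_bounded_below {R : realType} {d : nat}
    (mu nu : probability (Borel R d) R) :
  (forall phi : 'rV[R]_d -> \bar R,
     lower_semicontinuous phi -> proper_fun phi -> ext_convex phi ->
     (exists c : R, forall x, (c%:E <= phi x)%E) ->
     (\int[mu]_x phi x <= \int[nu]_x phi x)%E) ->
  forall phi : 'rV[R]_d -> \bar R,
    lower_semicontinuous phi -> proper_fun phi -> ext_convex phi ->
    integral_exists nu phi -> (\int[mu]_x phi x <= \int[nu]_x phi x)%E.
Proof.
move=> le_bounded phi lsc_phi proper_phi cvx_phi [mphi nu_phi].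
have [nu_pos_lty|] := boolP (\int[nu]_x phi^\+ x < +oo)%E.
  apply: le_integral_truncations => //; first by case: proper_phi.
  move=> n; apply: le_bounded.
  - exact: lower_semicontinuous_maxe_cst.
  - exact: proper_fun_maxe_cst.
  - exact: ext_convex_maxe_cst.
  - by exists (- n%:R)%R => x; rewrite le_max lexx orbT.
(* Otherwise [\int[nu] phi = +oo]. *)
rewrite -leNgt leye_eq => /eqP nu_pos_y.
have nu_neg_fin : (\int[nu]_x phi^\- x)%E \is a fin_num.
  case: nu_phi => [|nu_neg_lty]; first by rewrite nu_pos_y.
  by rewrite ge0_fin_numE // integral_ge0.
by rewrite [leRHS]integralE nu_pos_y -(fineK nu_neg_fin) -EFinN addye ?leey.
Qed.

Theorem mainTheorem7 (R : realType) (d : nat)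
  (mu nu : probability (Borel R d) R) :
  finite_first_moment mu -> finite_first_moment nu ->
  let cond_i :=
    forall phi : 'rV[R]_d -> \bar R,
      lower_semicontinuous phi -> proper_fun phi -> ext_convex phi ->
      integral_exists mu phi -> integral_exists nu phi ->
      (\int[mu]_x phi x <= \int[nu]_x phi x)%E in
  let cond_ii :=
    forall phi : 'rV[R]_d -> \bar R,
      lower_semicontinuous phi -> proper_fun phi -> ext_convex phi ->
      (exists c : R, forall x, (c%:E <= phi x)%E) ->
      (\int[mu]_x phi x <= \int[nu]_x phi x)%E in
  let cond_iii :=
    forall phi : 'rV[R]_d -> R,
      lipschitz_fun phi -> real_convex phi ->
      (\int[mu]_x (phi x)%:E <= \int[nu]_x (phi x)%:E)%E in
  (cond_i <-> cond_ii) /\ (cond_ii <-> cond_iii).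
Proof.
(* Only [nu] needs a finite first moment. *)
move=> _ nu_moment cond_i cond_ii cond_iii.
have ii_i := @le_integral_convex_of_bounded_below R d mu nu.
split; split.
- move=> le_i phi lsc_phi proper_phi cvx_phi [c phi_ge].
  by apply: le_i => //; exact: integral_exists_bounded_below phi_ge.
- by move=> le_ii phi lsc_phi proper_phi cvx_phi _; exact: ii_i.
- move=> le_ii f lip_f cvx_f; apply: ii_i => //.
  + exact: lipschitz_lower_semicontinuous.
  + by split=> //; exists 0.
  + exact: integral_exists_lipschitz.
- move=> le_iii phi lsc_phi [_ [x0 phix0]] cvx_phi [c phi_ge].
  exact: (le_integral_of_lipschitz_convex phi phi_ge lsc_phi phix0 cvx_phi).
Qed.
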